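(* Let $C$ be a convex body in the plane accessible only through a separation oracle, and let $P$ be a set of $n$ points in the plane. The classification algorithm for reverse emptiness (described in the context) performs $O\bigl(|F_{\mathrm{in}}|\log n\bigr)$ oracle queries. The algorithm correctly verifies that $P\cap C=P$ or finds a witness point of $P$ outside $C$.
   Context: Separation oracle: given $q\in\mathbb{R}^2$, it either reports $q\in C$ or returns a line separating $q$ from $C$. The inner fence $F_{\mathrm{in}}$ of $P$ is a closed convex polygon with the minimum number of vertices such that $F_{\mathrm{in}}\subseteq C$ and $C\cap P=F_{\mathrm{in}}\cap P$; $|F_{\mathrm{in}}|$ denotes its number of vertices. Algorithm: let $D=\mathrm{CH}(P)$, let $v,v'\in P$ be the leftmost and rightmost vertices of $D$, and $v_1,v_2$ (resp. $v'_1,v'_2$) the vertices of $D$ adjacent to $v$ (resp. $v'$). Query these six points; if any is outside, halt and report it. Otherwise handle the points above the segment $vv'$ as follows (the points below are handled symmetrically). Let $D^+$ be the part of the boundary chain of $D$ above $vv'$ between the vertical lines through $v$ and $v'$, with edges $e_1,\dots,e_k$ in clockwise order from $v$ to $v'$; for $i<j$ let $D[i,j]$ be the chain of edges $e_i,\dots,e_j$. A recursive call $(i,j)$ (starting with $(1,k)$) must verify that the points of $P$ below $D[i,j]$ are in $C$: let $\ell_i,\ell_j$ be the lines through $e_i,e_j$ and $q=\ell_i\cap\ell_j$; query $q$. If $q\in C$, all points of $P$ below $D[i,j]$ are classified inside and the call returns. Otherwise let $m=\lfloor (i+j)/2\rfloor$ and $e_m=(x,y)$; query $x$ and $y$; if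 either is outside, report it as a witness; otherwise recurse on $(i,m)$ and $(m,j)$. *)

From HB Require Import structures.
From mathcomp Require Import all_boot all_order all_algebra.
From mathcomp Require Import all_classical all_reals all_analysis.
Set Implicit Arguments. Unset Strict Implicit. Unset Printing Implicit Defensive.
Import Order.TTheory GRing.Theory Num.Theory numFieldNormedType.Exports.
Local Open Scope ring_scope.
Local Open Scope classical_set_scope.

Section Geom.
Variable R : realType.
Notation pt := (R * R)%type.

Definition cross (u w : pt) : R := u.1 * w.2 - u.2 * w.1.
Definition vsub (a b : pt) : pt := (a.1 - b.1, a.2 - b.2).

(* orientation of (a,b,c): > 0 iff c is strictly to the left of the
   directed line a -> b (i.e. "above" it when b is to the right of a) *)
Definition orient (a b c : pt) : R := cross (vsub b a) (vsub c a).

(* intersection point of the line through a,b and the line through c,d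
   (only meaningful when the lines are not parallel) *)
Definition meet (a b c d : pt) : pt :=
  let t := cross (vsub c a) (vsub d c) / cross (vsub b a) (vsub d c) in
  (a.1 + t * (b.1 - a.1), a.2 + t * (b.2 - a.2)).

Definition lex_lt (p q : pt) : bool := (p.1 < q.1) || ((p.1 == q.1) && (p.2 < q.2)).

Definition conv (V : seq pt) : set pt := fun z =>
  exists w : nat -> R, (forall i, 0 <= w i) /\ (\sum_(i < size V) w i = 1) /\
    z = (\sum_(i < size V) w i * (nth (0, 0) V i).1,
         \sum_(i < size V) w i * (nth (0, 0) V i).2).

Definition convex_set (C : set pt) : Prop := forall x y t, C x -> C y ->
  0 <= t <= 1 -> C (t * x.1 + (1 - t) * y.1, t * x.2 + (1 - t) * y.2).

Definition convex_body (C : set pt) : Prop :=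
  [/\ convex_set C, compact C & C° !=set0].

(* separation oracle for C: None = "q is in C"; Some (a,b,c) = the line
   a x + b y = c strictly separating q from C *)
Definition sep_oracle (C : set pt) (O : pt -> option (R * R * R)) : Prop :=
  forall q, match O q with
  | None => C q
  | Some (a, b, c) => (a, b) != (0, 0) /\ c < a * q.1 + b * q.2 /\
                      (forall z, C z -> a * z.1 + b * z.2 <= c)
  end.

Definition hull_vertex (P : seq pt) (p : pt) : Prop :=
  p \in P /\ ~ conv [seq x <- P | x != p] p.

Definition lexmin_of (P : seq pt) (v : pt) : Prop :=
  v \in P /\ forall p, p \in P -> p != v -> lex_lt v p.
Definition lexmax_of (P : seq pt) (v : pt) : Prop :=
  v \in P /\ forall p, p \in P -> p != v -> lex_lt p v.

Definition upper_chain (P : seq pt) (v v' : pt) (U : seq pt) : Prop :=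
  sorted lex_lt U /\ forall p, p \in U <-> (hull_vertex P p /\ 0 <= orient v v' p).
Definition lower_chain (P : seq pt) (v v' : pt) (L : seq pt) : Prop :=
  sorted (fun p q => lex_lt q p) L /\
  forall p, p \in L <-> (hull_vertex P p /\ orient v v' p <= 0).

Definition inner_fence (C : set pt) (P : seq pt) (V : seq pt) : Prop :=
  conv V `<=` C /\ (forall p, p \in P -> (conv V p <-> C p)).

Definition inner_fence_size (C : set pt) (P : seq pt) (k : nat) : Prop :=
  (exists V, inner_fence C P V /\ size V = k) /\
  (forall V, inner_fence C P V -> (k <= size V)%N).

Inductive outcome := AllIn | Witness of pt | Stuck.

Definition mem_of (O : pt -> option (R * R * R)) (q : pt) : bool :=
  if O q is None then true else false.

(* Recursive call (i,j) on the chain W = [w_0; ...; w_k] whose edges are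
   e_i = (w_(i-1), w_i), i = 1..k.  Returns the outcome together with the
   list of points queried (in order).  [fuel] only ensures termination;
   running out of fuel yields [Stuck]. *)
Fixpoint verify (fuel : nat) (O : pt -> option (R * R * R)) (W : seq pt)
    (i j : nat) : outcome * seq pt :=
  match fuel with
  | 0 => (Stuck, [::])
  | fuel'.+1 =>
    if (j <= i)%N then (AllIn, [::]) else
    let w n := nth (0, 0) W n in
    let q := meet (w i.-1) (w i) (w j.-1) (w j) in
    if mem_of O q then (AllIn, [:: q]) else
    let m := (i + j)./2 in
    let x := w m.-1 in let y := w m in
    if ~~ mem_of O x then (Witness x, [:: q; x]) else
    if ~~ mem_of O y then (Witness y, [:: q; x; y]) else
    let (r1, Q1) := verify fuel' O W i m in
    match r1 with
    | AllIn => let (r2, Q2) := verify fuel' O W m j in (r2, [:: q; x; y] ++ Q1 ++ Q2)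
    | _ => (r1, [:: q; x; y] ++ Q1)
    end
  end.

Definition verify_chain (O : pt -> option (R * R * R)) (W : seq pt) :=
  verify (size W) O W 1 (size W).-1.

Fixpoint check_list (O : pt -> option (R * R * R)) (s : seq pt) : option pt * seq pt :=
  match s with
  | [::] => (None, [::])
  | q :: s' => if mem_of O q then let (r, Q) := check_list O s' in (r, q :: Q)
               else (Some q, [:: q])
  end.

Definition classify (O : pt -> option (R * R * R)) (v v' : pt) (U L : seq pt)
  : outcome * seq pt :=
  let six := [:: v; nth v U 1; nth v L (size L).-2;
                 v'; nth v U (size U).-2; nth v L 1] in
  let (r0, Q0) := check_list O six in
  match r0 with
  | Some p => (Witness p, Q0)
  | None =>
    let (r1, Q1) := verify_chain O U in
    match r1 with
    | AllIn => let (r2, Q2) := verify_chain O L in (r2, Q0 ++ Q1 ++ Q2)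
    | _ => (r1, Q0 ++ Q1)
    end
  end.

End Geom.

Arguments AllIn {R}.
Arguments Stuck {R}.
Arguments Witness {R} _.

(* A query point [q] of a call [(i, j)] lies on the rays of the
   edges [e_i] and [e_j] beyond the chain, so the triangle [w_(i-1) q w_j]
   contains every chain vertex of the call: once [q] is inside the convex body
   [C], so are they. A point of [P] outside [C] yields, by maximising the
   separating functional, a vertex of [CH(P)] outside [C], which lies on the
   upper or on the lower chain; the lower chain is the upper chain of the
   reflected point set, so only upper chains need to be analysed.

   Let [V] be an optimal inner fence. If the query point [q] of a
   call is outside [C] while the chain vertices around it are inside, those
   vertices lie in [conv V], and some edge [(a, b)] of [conv V] separates [q]
   from [V]; its direction turns strictly between the directions of [e_i] and
   [e_j]. Charge the call to the fence vertex [a]. Because the chain turns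
   monotonically, no vertex is charged by both halves of a call, so along every
   level of the recursion the charges add up to at most [|V|]. Each charged
   call costs three queries and the recursion has depth [log n + 1], which
   gives [O(|V| log n)] queries. *)

From Pilot Require Import Defs.
From HB Require Import structures.
From mathcomp Require Import all_boot all_order all_algebra.
From mathcomp Require Import all_classical all_reals all_analysis.
From mathcomp Require Import ring lra zify.
Set Implicit Arguments. Unset Strict Implicit. Unset Printing Implicit Defensive.
Import Order.TTheory GRing.Theory Num.Theory.
Local Open Scope ring_scope.
Local Open Scope classical_set_scope.
(* Both names also exist in MathComp-Analysis. *)
Local Notation conv := Pilot.Defs.conv.
Local Notation convex_set := Pilot.Defs.convex_set.

Lemma nth_mem_sub (T : eqType) (x0 : T) (s A : seq T) n :
  x0 \in A -> {subset s <= A} -> nth x0 s n \in A.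
Proof.
move=> x0A sA; have [ns|sn] := ltnP n (size s); first exact/sA/mem_nth.
by rewrite nth_default.
Qed.

Section NumLemmas.
Variable R : realDomainType.

Lemma mul_self_ge0 (x : R) : 0 <= x * x.
Proof. by rewrite -expr2 sqr_ge0. Qed.

Lemma sqr_sum_eq0 (x y : R) : x * x + y * y = 0 -> x = 0 /\ y = 0.
Proof.
move/eqP; rewrite paddr_eq0 ?mul_self_ge0 // !mulf_eq0 !orbb.
by move=> /andP[/eqP -> /eqP ->].
Qed.

Lemma argmax_seq (T : eqType) (f : T -> R) (s : seq T) : s != [::] ->
  exists2 x, x \in s & {in s, forall y, f y <= f x}.
Proof.
elim: s => // x [|y s] IH _.
  by exists x; rewrite ?mem_head // => y; rewrite mem_seq1 => /eqP ->.
have [m ms mmax] := IH isT.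
have [le|lt] := leP (f m) (f x).
  exists x; first exact: mem_head.
  by move=> z; rewrite in_cons => /predU1P[->//|/mmax /le_trans]; apply.
exists m; first by rewrite in_cons ms orbT.
by move=> z; rewrite in_cons => /predU1P[->|/mmax //]; apply: ltW.
Qed.

Lemma lex_argmax_seq (T : eqType) (f g : T -> R) (s : seq T) : s != [::] ->
  exists2 x, x \in s & {in s, forall y, f y <= f x /\ (f y = f x -> g y <= g x)}.
Proof.
move=> /(argmax_seq f) [m ms mmax].
have /(argmax_seq g) [x] : [seq y <- s | f y == f m] != [::].
  have : m \in [seq y <- s | f y == f m] by rewrite mem_filter eqxx.
  by apply: contraTneq => ->.
rewrite mem_filter => /andP[/eqP fx xs] xmax; exists x => // y ys.
by rewrite fx; split=> [|fy]; [exact: mmax | apply: xmax; rewrite mem_filter fy eqxx].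
Qed.

End NumLemmas.

Lemma ler_ratio (R : numFieldType) (x y u w : R) : 0 < y -> 0 < w ->
  (x / y <= u / w) = (x * w <= u * y).
Proof. by move=> y0 w0; rewrite ler_pdivrMr // mulrAC ler_pdivlMr. Qed.

Lemma sum_delta (R : pzSemiRingType) (n k : nat) (F : nat -> R) : (k < n)%N ->
  \sum_(i < n) (i == k :> nat)%:R * F i = F k.
Proof.
move=> hk; rewrite (bigD1 (Ordinal hk)) //= eqxx mul1r big1 ?addr0 // => i.
by rewrite -val_eqE /= => /negPf ->; rewrite mul0r.
Qed.

Section PlaneGeometry.
Variable R : realType.
Local Notation pt := (R * R)%type.

Definition lin (a b : R) (x : pt) : R := a * x.1 + b * x.2.

Lemma orientE (a b c : pt) :
  orient a b c = (b.1 - a.1) * (c.2 - a.2) - (b.2 - a.2) * (c.1 - a.1).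
Proof. by []. Qed.

Lemma orient_lin (a b z : pt) :
  orient a b z = lin (a.2 - b.2) (b.1 - a.1) z - lin (a.2 - b.2) (b.1 - a.1) a.
Proof. rewrite orientE /lin; ring. Qed.

Lemma orient_swap12 (a b z : pt) : orient b a z = - orient a b z.
Proof. rewrite !orientE; ring. Qed.

Lemma orient_swap23 (a b z : pt) : orient a z b = - orient a b z.
Proof. rewrite !orientE; ring. Qed.

Lemma orient_rot (a b z : pt) : orient b z a = orient a b z.
Proof. rewrite !orientE; ring. Qed.

Lemma orient_dup23 (a b : pt) : orient a b b = 0.
Proof. rewrite orientE; ring. Qed.

Lemma orient_dup12 (a b : pt) : orient a a b = 0.
Proof. rewrite orientE; ring. Qed.

Lemma orient_split (x y z p : pt) :
  orient p y z + orient x p z + orient x y p = orient x y z.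
Proof. rewrite !orientE; ring. Qed.

Lemma cross_vsub (a b x y : pt) :
  cross (vsub b a) (vsub y x) = orient a b y - orient a b x.
Proof. rewrite /orient /cross /=; ring. Qed.

Lemma sqr_sum_gt0 (p q : pt) : p != q ->
  0 < (p.1 - q.1) * (p.1 - q.1) + (p.2 - q.2) * (p.2 - q.2).
Proof.
move=> npq; rewrite lt_def addr_ge0 ?mul_self_ge0 // andbT.
apply: contra npq => /eqP /sqr_sum_eq0 [/subr0_eq e1 /subr0_eq e2].
by rewrite [p]surjective_pairing [q]surjective_pairing e1 e2.
Qed.

(** * Convex hulls of finite point sets *)

Definition conv_weights (V : seq pt) (w : nat -> R) (z : pt) : Prop :=
  [/\ forall i, 0 <= w i, \sum_(i < size V) w i = 1 &
    z = (\sum_(i < size V) w i * (nth (0, 0) V i).1,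
         \sum_(i < size V) w i * (nth (0, 0) V i).2)].

Lemma convP (V : seq pt) z : conv V z <-> exists w, conv_weights V w z.
Proof.
split=> [[w [w0 [w1 hz]]]|[w [w0 w1 hz]]]; by exists w.
Qed.

Lemma lin_weights (V : seq pt) w z a b : conv_weights V w z ->
  lin a b z = \sum_(i < size V) w i * lin a b (nth (0, 0) V i).
Proof.
move=> [_ _ ->]; rewrite /lin /= !mulr_sumr -big_split /=.
by apply: eq_bigr => i _; ring.
Qed.

Lemma conv_lin_ge (V : seq pt) z a b c : conv V z ->
  {in V, forall x, c <= lin a b x} -> c <= lin a b z.
Proof.
move=> /convP[w [w0 w1 hz]] H; rewrite (lin_weights a b (And3 w0 w1 hz)).
rewrite -[c]mul1r -w1 mulr_suml; apply: ler_sum => i _.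
by rewrite ler_wpM2l // H // mem_nth.
Qed.

Lemma conv_orient_ge0 (V : seq pt) a b z : conv V z ->
  {in V, forall x, 0 <= orient a b x} -> 0 <= orient a b z.
Proof.
move=> hz H; rewrite orient_lin subr_ge0; apply: conv_lin_ge hz _ => x /H.
by rewrite orient_lin subr_ge0.
Qed.

Lemma conv_orient_le0 (V : seq pt) a b z : conv V z ->
  {in V, forall x, orient a b x <= 0} -> orient a b z <= 0.
Proof.
move=> hz H; rewrite -oppr_ge0 -orient_swap12; apply: conv_orient_ge0 hz _ => x /H h.
by rewrite orient_swap12 oppr_ge0.
Qed.

Lemma conv_nonempty (V : seq pt) z : conv V z -> V != [::].
Proof.
case: V => // /convP[w [_ + _]]; rewrite big_ord0 => /eqP.
by rewrite eq_sym oner_eq0.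
Qed.

Lemma mem_conv (V : seq pt) x : x \in V -> conv V x.
Proof.
move=> xV; have hk : (index x V < size V)%N by rewrite index_mem.
apply/convP; exists (fun i => (i == index x V)%:R); split.
- by move=> i; rewrite ler0n.
- by have := sum_delta (fun=> 1 : R) hk; under eq_bigr do rewrite mulr1.
- rewrite (sum_delta (fun i => (nth (0, 0) V i).1)) //.
  by rewrite (sum_delta (fun i => (nth (0, 0) V i).2)) // nth_index -?surjective_pairing.
Qed.

Lemma conv_convex (V : seq pt) : convex_set (conv V).
Proof.
move=> x y t /convP[wx [wx0 wx1 ->]] /convP[wy [wy0 wy1 ->]] /andP[t0 t1].
apply/convP; exists (fun i => t * wx i + (1 - t) * wy i); split.
- by move=> i; rewrite addr_ge0 ?mulr_ge0 ?subr_ge0.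
- by rewrite big_split /= -!mulr_sumr wx1 wy1; ring.
- by congr (_, _); rewrite /= !mulr_sumr -big_split /=; apply: eq_bigr => i _; ring.
Qed.

Lemma weights_gap_sum (V : seq pt) w z a b : conv_weights V w z ->
  \sum_(i < size V) w i * (lin a b z - lin a b (nth (0, 0) V i)) = 0.
Proof.
move=> hw; have [_ w1 _] := hw.
under eq_bigr do rewrite mulrBr.
by rewrite sumrB -mulr_suml w1 mul1r -(lin_weights a b hw) subrr.
Qed.

Lemma weights_face (V : seq pt) w z a b : conv_weights V w z ->
  {in V, forall x, lin a b x <= lin a b z} ->
  forall i, (i < size V)%N -> w i != 0 -> lin a b (nth (0, 0) V i) = lin a b z.
Proof.
move=> hw H i hi wi0; have [w0 _ _] := hw.
have nonneg (j : 'I_(size V)) : true -> 0 <= w j * (lin a b z - lin a b (nth (0, 0) V j)).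
  by rewrite mulr_ge0 ?subr_ge0 ?H ?mem_nth.
have := psumr_eq0P nonneg (weights_gap_sum a b hw) (i := Ordinal hi) isT.
by move=> /eqP; rewrite mulf_eq0 (negPf wi0) subr_eq0 => /eqP <-.
Qed.

Lemma lex_extreme_notin_conv (V : seq pt) z a b a' b' :
  {in V, forall x, lin a b x < lin a b z \/
     lin a b x = lin a b z /\ lin a' b' x < lin a' b' z} ->
  ~ conv V z.
Proof.
move=> H /convP[w hw]; have [w0 w1 _] := hw.
have le_z : {in V, forall x, lin a b x <= lin a b z}.
  by move=> x /H [/ltW //|[-> _]].
have gap_gt0 i : (i < size V)%N -> w i != 0 ->
    0 < lin a' b' z - lin a' b' (nth (0, 0) V i).
  move=> hi wi0; rewrite subr_gt0.
  have [|[] //] := H _ (mem_nth (0, 0) hi).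
  by rewrite (weights_face hw le_z hi wi0) ltxx.
have nonneg (j : 'I_(size V)) :
    true -> 0 <= w j * (lin a' b' z - lin a' b' (nth (0, 0) V j)).
  have [->|wj0] := eqVneq (w j) 0; first by rewrite mul0r.
  by rewrite mulr_ge0 // ltW // gap_gt0.
have gap0 := psumr_eq0P nonneg (weights_gap_sum a' b' hw).
suff w_eq0 (i : 'I_(size V)) : w i = 0.
  by move: w1; rewrite big1 // => /esym /eqP; rewrite oner_eq0.
apply/eqP; apply: contraT => wi0; have /eqP := gap0 i isT.
by rewrite mulf_eq0 (negPf wi0) /= gt_eqF // gap_gt0.
Qed.

Lemma lexmin_hull_vertex (P : seq pt) v : lexmin_of P v -> hull_vertex P v.
Proof.
move=> [vP vmin]; split=> //; apply: (@lex_extreme_notin_conv _ _ (-1) 0 0 (-1)).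
move=> x; rewrite mem_filter /lin => /andP[xv /vmin /(_ xv)].
rewrite /lex_lt => /orP[lt|/andP[/eqP e lt]]; [left|right].
- by rewrite !mul0r !addr0 !mulN1r ltrN2.
- by rewrite e !mul0r !add0r !mulN1r ltrN2.
Qed.

Lemma lexmax_hull_vertex (P : seq pt) v : lexmax_of P v -> hull_vertex P v.
Proof.
move=> [vP vmax]; split=> //; apply: (@lex_extreme_notin_conv _ _ 1 0 0 1).
move=> x; rewrite mem_filter /lin => /andP[xv /vmax /(_ xv)].
rewrite /lex_lt => /orP[lt|/andP[/eqP e lt]]; [left|right].
- by rewrite !mul0r !addr0 !mul1r.
- by rewrite e !mul0r !add0r !mul1r.
Qed.

Lemma lin_perp_inj (u1 u2 : R) (x y : pt) : (u1, u2) != (0, 0) ->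
  lin u1 u2 x = lin u1 u2 y -> lin (- u2) u1 x = lin (- u2) u1 y -> x = y.
Proof.
move=> u0 e1 e2.
have n0 : u1 * u1 + u2 * u2 != 0.
  by apply: contra u0 => /eqP /sqr_sum_eq0 [-> ->].
have d1 : (u1 * u1 + u2 * u2) * (x.1 - y.1) = 0.
  transitivity (u1 * (lin u1 u2 x - lin u1 u2 y)
                - u2 * (lin (- u2) u1 x - lin (- u2) u1 y)).
    by rewrite /lin; ring.
  by rewrite e1 e2 !subrr !mulr0 subrr.
have d2 : (u1 * u1 + u2 * u2) * (x.2 - y.2) = 0.
  transitivity (u2 * (lin u1 u2 x - lin u1 u2 y)
                + u1 * (lin (- u2) u1 x - lin (- u2) u1 y)).
    by rewrite /lin; ring.
  by rewrite e1 e2 !subrr !mulr0 addr0.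
move/eqP: d1; move/eqP: d2; rewrite !mulf_eq0 (negPf n0) !subr_eq0 /= => /eqP e /eqP e'.
by rewrite [x]surjective_pairing [y]surjective_pairing e e'.
Qed.

Lemma extreme_hull_vertex (P : seq pt) (u1 u2 : R) : P != [::] -> (u1, u2) != (0, 0) ->
  exists2 a, hull_vertex P a & {in P, forall x, lin u1 u2 x <= lin u1 u2 a}.
Proof.
move=> P0 u0; have [a aP amax] := lex_argmax_seq (lin u1 u2) (lin (- u2) u1) P0.
exists a => [|x /amax [] //]; split=> //.
apply: (@lex_extreme_notin_conv _ _ u1 u2 (- u2) u1) => x.
rewrite mem_filter => /andP[xa /amax [le eqg]].
have [lt|gt|e] := ltgtP (lin u1 u2 x) (lin u1 u2 a).
- by left.
- by move: le; rewrite leNgt gt.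
right.
split=> //; rewrite lt_def (eqg e) andbT.
by apply: contra xa => /eqP/esym/(lin_perp_inj u0 e)/eqP.
Qed.

Lemma outside_hull_vertex (C : set pt) O (P : seq pt) p :
  sep_oracle C O -> p \in P -> ~ C p -> exists2 a, hull_vertex P a & ~ C a.
Proof.
move=> hO pP pC; move: (hO p); case: (O p) => [[[u1 u2] c]|//] [u0 [cp sep]].
have [|a ha amax] := @extreme_hull_vertex P u1 u2 _ u0; first by case: (P) pP.
exists a => // /sep ac; have := le_trans (amax p pP) ac.
by rewrite /lin leNgt cp.
Qed.

(** * Convex sets *)

Lemma convex_vertical (S : set pt) x y1 y2 y : convex_set S ->
  S (x, y1) -> S (x, y2) -> y1 <= y <= y2 -> S (x, y).
Proof.
move=> cv S1 S2 /andP[le1 le2]; have [e|ne] := eqVneq y1 y2.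
  by have -> : y = y1 by apply/eqP; rewrite eq_le le1 e le2.
have d0 : 0 < y2 - y1 by rewrite subr_gt0 lt_def eq_sym ne (le_trans le1 le2).
set t := (y - y1) / (y2 - y1).
have t01 : 0 <= t <= 1.
  rewrite /t ler_pdivrMr // mul1r lerD2r le2 andbT.
  by rewrite divr_ge0 ?subr_ge0 // (le_trans le1 le2).
have := cv _ _ t S2 S1 t01; congr S; congr (_, _) => /=; rewrite /t.
  by ring.
by field; rewrite gt_eqF.
Qed.

Definition chord_at (a b : pt) x : pt :=
  (x, a.2 + (x - a.1) / (b.1 - a.1) * (b.2 - a.2)).

Lemma convex_chord_at (S : set pt) a b x : convex_set S -> S a -> S b ->
  a.1 < b.1 -> a.1 <= x <= b.1 -> S (chord_at a b x).
Proof.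
move=> cv Sa Sb ab /andP[ax xb]; have d0 : 0 < b.1 - a.1 by rewrite subr_gt0.
set t := (b.1 - x) / (b.1 - a.1).
have t01 : 0 <= t <= 1.
  by rewrite /t ler_pdivrMr // mul1r lerD2l lerN2 ax andbT divr_ge0 ?subr_ge0 // ltW.
have := cv _ _ t Sa Sb t01; congr S; rewrite /chord_at /t.
by congr (_, _); field; rewrite gt_eqF.
Qed.

Lemma chord_at_orient (a b q : pt) : a.1 < b.1 ->
  ((chord_at a b q.1).2 - q.2) * (b.1 - a.1) = orient a q b.
Proof.
move=> ab; rewrite /chord_at orientE /=; field.
by rewrite gt_eqF // subr_gt0.
Qed.

Lemma convex_above_chord (S : set pt) (p q r v v' : pt) : convex_set S ->
  S p -> S r -> S v -> S v' ->
  v.1 <= p.1 -> p.1 <= q.1 -> q.1 <= r.1 -> r.1 <= v'.1 ->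
  (p.1 = r.1 -> p.2 <= q.2 <= r.2) ->
  0 <= orient v v' q -> 0 <= orient p q r -> S q.
Proof.
(* [q] lies on the vertical segment between the chords [v v'] and [p r]. *)
move=> cv Sp Sr Sv Sv' vp pq qr rv' vert qv pqr.
rewrite [q]surjective_pairing.
have [e|ne] := eqVneq p.1 r.1.
  have -> : q.1 = p.1 by apply/eqP; rewrite eq_le pq e qr.
  have Sp' : S (p.1, p.2) by rewrite -surjective_pairing.
  have Sr' : S (p.1, r.2) by rewrite e -surjective_pairing.
  exact: convex_vertical Sp' Sr' (vert e).
have pr : p.1 < r.1 by rewrite lt_def eq_sym ne (le_trans pq qr).
have vv : v.1 < v'.1 by apply: le_lt_trans vp (lt_le_trans pr rv').
apply: (@convex_vertical _ _ (chord_at v v' q.1).2 (chord_at p r q.1).2) => //.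
- by apply: convex_chord_at; rewrite ?(le_trans vp pq) ?(le_trans qr rv').
- by apply: convex_chord_at; rewrite ?pq.
apply/andP; split.
  rewrite -subr_le0 -(pmulr_lle0 _ (_ : 0 < v'.1 - v.1)) ?subr_gt0 //.
  by rewrite chord_at_orient // orient_swap23 oppr_le0.
by rewrite -subr_ge0 -(pmulr_lge0 _ (_ : 0 < r.1 - p.1)) ?subr_gt0 // chord_at_orient.
Qed.

Lemma convex_comb3 (S : set pt) (x y z : pt) la lb lc : convex_set S ->
  S x -> S y -> S z -> 0 <= la -> 0 <= lb -> 0 <= lc -> la + lb + lc = 1 ->
  S (la * x.1 + lb * y.1 + lc * z.1, la * x.2 + lb * y.2 + lc * z.2).
Proof.
move=> cv Sx Sy Sz la0 lb0 lc0 l1; have [s0|sn0] := eqVneq (lb + lc) 0.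
  have [lb00 lc00] : lb = 0 /\ lc = 0.
    by move/eqP: s0; rewrite paddr_eq0 // => /andP[/eqP -> /eqP ->].
  move: l1; rewrite lb00 lc00 !addr0 => ->; rewrite !mul1r !mul0r !addr0.
  by rewrite -surjective_pairing.
have s_gt0 : 0 < lb + lc by rewrite lt_def sn0 addr_ge0.
have Syz : S (lb / (lb + lc) * y.1 + (1 - lb / (lb + lc)) * z.1,
              lb / (lb + lc) * y.2 + (1 - lb / (lb + lc)) * z.2).
  by apply: cv => //; rewrite ler_pdivrMr // mul1r lerDl lc0 andbT divr_ge0 // ltW.
have la01 : 0 <= la <= 1 by rewrite la0 -l1 -addrA lerDl addr_ge0.
have := cv _ _ la Sx Syz la01; congr S; rewrite /=.
have -> : 1 - la = lb + lc by rewrite -l1; ring.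
by congr (_, _); field; rewrite gt_eqF.
Qed.

Lemma orient_barycentric (x y z p : pt) : orient x y z != 0 ->
  p = (orient p y z / orient x y z * x.1 + orient x p z / orient x y z * y.1
         + orient x y p / orient x y z * z.1,
       orient p y z / orient x y z * x.2 + orient x p z / orient x y z * y.2
         + orient x y p / orient x y z * z.2).
Proof.
rewrite orientE => o; rewrite [LHS]surjective_pairing !orientE.
by congr (_, _); field.
Qed.

Lemma convex_triangle (S : set pt) (x y z p : pt) : convex_set S ->
  S x -> S y -> S z -> orient x y z < 0 ->
  orient p y z <= 0 -> orient x p z <= 0 -> orient x y p <= 0 -> S p.
Proof.
move=> cv Sx Sy Sz o o1 o2 o3.
have w_ge0 u : u <= 0 -> 0 <= u / orient x y z.
  by move=> u0; rewrite mulr_le0 // ltW // invr_lt0.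
rewrite (orient_barycentric p (ltr0_neq0 o)); apply: convex_comb3; rewrite ?w_ge0 //.
by rewrite -!mulrDl orient_split divff // ltr0_neq0.
Qed.

(** * Convex chains *)

Lemma lex_ltP (p q : pt) : lex_lt p q -> p.1 <= q.1 /\ (p.1 = q.1 -> p.2 < q.2).
Proof.
case/orP=> [lt|/andP[/eqP e lt]]; split=> [|e'].
- exact: ltW.
- by move: lt; rewrite e' ltxx.
- by rewrite e.
- exact: lt.
Qed.

Lemma lex_lt_irr : irreflexive (@lex_lt R).
Proof. by move=> p; rewrite /lex_lt !ltxx andbF. Qed.

Lemma lex_lt_trans : transitive (@lex_lt R).
Proof.
move=> q p r /orP[pq|/andP[/eqP pq pq']] /orP[qr|/andP[/eqP qr qr']]; apply/orP.
- by left; exact: lt_trans pq qr.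
- by left; rewrite -qr.
- by left; rewrite pq.
- by right; rewrite pq qr eqxx (lt_trans pq' qr').
Qed.

Lemma lex_lt_neq (p q : pt) : lex_lt p q -> p != q.
Proof. by apply: contraTneq => ->; rewrite lex_lt_irr. Qed.

Definition vtx (W : seq pt) n : pt := nth (0, 0) W n.
Definition edge (W : seq pt) s : pt := vsub (vtx W s) (vtx W s.-1).

Definition cw_vertices (W : seq pt) : Prop := forall p q r,
  (p < q)%N -> (q < r)%N -> (r < size W)%N -> orient (vtx W p) (vtx W q) (vtx W r) < 0.
Definition cw_edges (W : seq pt) : Prop := forall s t,
  (0 < s)%N -> (s < t)%N -> (t < size W)%N -> cross (edge W s) (edge W t) < 0.
Definition convex_chain (W : seq pt) : Prop := cw_vertices W /\ cw_edges W.

Lemma sorted_lex_vtx (W : seq pt) i j : sorted (@lex_lt R) W ->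
  (i < j)%N -> (j < size W)%N -> lex_lt (vtx W i) (vtx W j).
Proof.
move=> sW ij jW; apply: (sorted_ltn_nth lex_lt_trans) => //.
by rewrite inE (ltn_trans ij jW).
Qed.

Lemma sorted_lex_first (W : seq pt) v : sorted (@lex_lt R) W -> v \in W ->
  {in W, forall p, p != v -> lex_lt v p} -> vtx W 0 = v.
Proof.
move=> sW vW vmin; have iW : (index v W < size W)%N by rewrite index_mem.
case: (posnP (index v W)) => [i0|i0]; first by rewrite /vtx -i0 nth_index.
have := sorted_lex_vtx sW i0 iW; rewrite {2}/vtx nth_index // => lt0.
have ne : vtx W 0 != v by apply: contraTneq lt0 => ->; rewrite lex_lt_irr.
have /vmin /(_ ne) := mem_nth (0, 0) (ltn_trans i0 iW).
by move=> /lex_lt_trans /(_ lt0); rewrite lex_lt_irr.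
Qed.

Lemma sorted_lex_last (W : seq pt) v : sorted (@lex_lt R) W -> v \in W ->
  {in W, forall p, p != v -> lex_lt p v} -> vtx W (size W).-1 = v.
Proof.
move=> sW vW vmax; have iW : (index v W < size W)%N by rewrite index_mem.
have [lt|ge] := ltnP (index v W) (size W).-1; last first.
  have -> : (size W).-1 = index v W by lia.
  by rewrite /vtx nth_index.
have lW : ((size W).-1 < size W)%N by lia.
have := sorted_lex_vtx sW lt lW; rewrite {1}/vtx nth_index // => lt0.
have ne : vtx W (size W).-1 != v by apply: contraTneq lt0 => ->; rewrite lex_lt_irr.
have /vmax /(_ ne) := mem_nth (0, 0) lW.
by move=> /(lex_lt_trans lt0); rewrite lex_lt_irr.
Qed.

Lemma cross_lt0_trans (a b c : pt) :
  lex_lt (0, 0) a -> lex_lt (0, 0) b -> lex_lt (0, 0) c ->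
  cross a b < 0 -> cross b c < 0 -> cross a c < 0.
Proof.
rewrite /lex_lt /cross /= => /orP[a1|/andP[/eqP<- a2]] /orP[b1|/andP[/eqP<- b2]]
  /orP[c1|/andP[/eqP<- c2]]; nra.
Qed.

Lemma lex_lt_vsub (p q : pt) : lex_lt p q -> lex_lt (0, 0) (vsub q p).
Proof. by rewrite /lex_lt /= !subr_gt0 [0 == _]eq_sym subr_eq0 [q.1 == _]eq_sym. Qed.

Lemma cw_edges_of_sorted (W : seq pt) :
  sorted (@lex_lt R) W -> cw_vertices W -> cw_edges W.
Proof.
move=> sW cwW s t s0 st tW.
have lexW i j : (i < j)%N -> (j <= t)%N -> lex_lt (0, 0) (vsub (vtx W j) (vtx W i)).
  by move=> ij jt; apply/lex_lt_vsub/sorted_lex_vtx; lia.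
apply: (@cross_lt0_trans _ (vsub (vtx W t) (vtx W s.-1))); rewrite ?lexW //; try lia.
- by apply: cwW; lia.
- by rewrite cross_vsub orient_dup23 sub0r orient_swap23 opprK; apply: cwW; lia.
Qed.

Section UpperChain.
Variables (P : seq pt) (v v' : pt) (U : seq pt).
Hypotheses (hv : lexmin_of P v) (hv' : lexmax_of P v') (hU : upper_chain P v v' U).

Lemma upper_chain_sub : {subset U <= P}.
Proof. by have [_ memU] := hU => p /memU [[]]. Qed.

Lemma upper_chain_mem_ends : v \in U /\ v' \in U.
Proof.
have [_ memU] := hU; split; apply/memU.
  by rewrite orient_rot orient_dup12; split=> //; exact: lexmin_hull_vertex.
by rewrite orient_dup23; split=> //; exact: lexmax_hull_vertex.
Qed.

Lemma upper_chain_ends : vtx U 0 = v /\ vtx U (size U).-1 = v'.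
Proof.
have [vU v'U] := upper_chain_mem_ends; split.
- apply: sorted_lex_first hU.1 vU _ => p /upper_chain_sub; exact: hv.2.
- apply: sorted_lex_last hU.1 v'U _ => p /upper_chain_sub; exact: hv'.2.
Qed.

Lemma upper_chain_cw : cw_vertices U.
Proof.
move=> p q r pq qr rU; have [sU memU] := hU; have [e0 e1] := upper_chain_ends.
have lexU i j : (i < j)%N -> (j < size U)%N -> lex_lt (vtx U i) (vtx U j).
  exact: sorted_lex_vtx.
have leU i j : (i <= j)%N -> (j < size U)%N -> (vtx U i).1 <= (vtx U j).1.
  by rewrite leq_eqVlt => /predU1P[-> //|ij jU]; case: (lex_ltP (lexU _ _ ij jU)).
have [[_ qhull] qv] := (memU (vtx U q)).1 (mem_nth _ (ltn_trans qr rU)).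
have inS t : (t < size U)%N -> t != q -> conv [seq x <- P | x != vtx U q] (vtx U t).
  move=> tU tq; apply: mem_conv; rewrite mem_filter upper_chain_sub ?mem_nth // andbT.
  case: (ltngtP t q) tq => // [tq|qt] _; first by rewrite lex_lt_neq ?lexU //; lia.
  by rewrite eq_sym lex_lt_neq ?lexU.
have [lpq epq] := lex_ltP (lexU _ _ pq (ltn_trans qr rU)).
have [lqr eqr] := lex_ltP (lexU _ _ qr rU).
(* Otherwise [vtx U q] would lie in the hull of [vtx U p], [vtx U r], [v] and [v']. *)
rewrite ltNge; apply/negP => pqr; apply: qhull; rewrite -e0 -e1 in qv.
apply: (convex_above_chord (@conv_convex _) _ _ _ _ _ lpq lqr _ _ qv pqr);
  try by [apply: inS; lia | apply: leU; lia].
move=> e; have e' : (vtx U p).1 = (vtx U q).1 by apply/eqP; rewrite eq_le lpq e lqr.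
by rewrite !ltW ?epq ?eqr // -e' e.
Qed.

Lemma upper_chain_spec : [/\ convex_chain U, vtx U 0 = v, vtx U (size U).-1 = v',
  {subset U <= P} & (0 < size U <= size P)%N].
Proof.
have [e0 e1] := upper_chain_ends; have [vU _] := upper_chain_mem_ends.
split=> //.
- by split; [exact: upper_chain_cw | exact: cw_edges_of_sorted hU.1 upper_chain_cw].
  exact: upper_chain_sub.
rewrite lt0n size_eq0; apply/andP; split; first by apply: contraTneq vU => ->.
exact: uniq_leq_size (sorted_uniq lex_lt_trans lex_lt_irr hU.1) upper_chain_sub.
Qed.

End UpperChain.

Definition negp (p : pt) : pt := (- p.1, - p.2).

Lemma negpK : involutive negp.
Proof. by move=> [x y]; rewrite /negp /= !opprK. Qed.

Lemma negp_inj : injective negp.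
Proof. exact: inv_inj negpK. Qed.

Lemma orient_negp (a b c : pt) : orient (negp a) (negp b) (negp c) = orient a b c.
Proof. rewrite !orientE /=; ring. Qed.

Lemma lex_lt_negp (p q : pt) : lex_lt (negp p) (negp q) = lex_lt q p.
Proof. by rewrite /lex_lt /= !ltrN2 eqr_opp eq_sym. Qed.

Lemma vtx_negp (W : seq pt) t : vtx (map negp W) t = negp (vtx W t).
Proof.
rewrite /vtx; have [lt|ge] := ltnP t (size W); first exact: nth_map.
by rewrite !nth_default ?size_map // /negp /= oppr0.
Qed.

Lemma conv_negp (V : seq pt) z : conv V z -> conv (map negp V) (negp z).
Proof.
move=> /convP[w [w0 w1 ->]]; apply/convP; exists w; split; rewrite ?size_map //.
rewrite /negp /= -!sumrN; congr (_, _); apply: eq_bigr => i _;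
  by rewrite (nth_map (0, 0)) // mulrN.
Qed.

Lemma hull_vertex_negp (P : seq pt) p :
  hull_vertex P p -> hull_vertex (map negp P) (negp p).
Proof.
move=> [pP pV]; split; first by rewrite mem_map //; exact: negp_inj.
rewrite filter_map => /conv_negp; rewrite -map_comp negpK (eq_map negpK) map_id.
by under eq_filter do rewrite /preim /= (inj_eq negp_inj).
Qed.

Lemma hull_vertex_negpE (P : seq pt) p :
  hull_vertex (map negp P) (negp p) <-> hull_vertex P p.
Proof.
split; last exact: hull_vertex_negp.
by move=> /hull_vertex_negp; rewrite -map_comp (eq_map negpK) map_id negpK.
Qed.

Lemma lexmin_negp (P : seq pt) v : lexmin_of P v -> lexmax_of (map negp P) (negp v).
Proof.
move=> [vP vmin]; split; first by rewrite mem_map //; exact: negp_inj.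
move=> _ /mapP[p pP ->]; rewrite (inj_eq negp_inj) lex_lt_negp; exact: vmin.
Qed.

Lemma lexmax_negp (P : seq pt) v : lexmax_of P v -> lexmin_of (map negp P) (negp v).
Proof.
move=> [vP vmax]; split; first by rewrite mem_map //; exact: negp_inj.
move=> _ /mapP[p pP ->]; rewrite (inj_eq negp_inj) lex_lt_negp; exact: vmax.
Qed.

Lemma lower_chain_negp (P : seq pt) v v' L :
  lower_chain P v v' L -> upper_chain (map negp P) (negp v') (negp v) (map negp L).
Proof.
move=> [sL memL]; split.
  by rewrite sorted_map; apply: sub_sorted sL => x y; rewrite /relpre /= lex_lt_negp.
move=> p; rewrite -[p]negpK (mem_map negp_inj) hull_vertex_negpE orient_negp memL.
by rewrite -oppr_ge0 -orient_swap12.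
Qed.

Lemma convex_chain_negp (W : seq pt) : convex_chain (map negp W) -> convex_chain W.
Proof.
rewrite /convex_chain /cw_vertices /cw_edges /edge size_map => -[cw ce]; split.
  by move=> p q r pq qr rW; rewrite -orient_negp -!vtx_negp; exact: cw.
move=> s t s0 st tW; have := ce s t s0 st tW.
by rewrite !vtx_negp /cross /vsub /negp /=; congr (_ < 0); ring.
Qed.

Lemma lower_chain_spec (P : seq pt) v v' L :
  lexmin_of P v -> lexmax_of P v' -> lower_chain P v v' L ->
  [/\ convex_chain L, vtx L 0 = v', vtx L (size L).-1 = v,
      {subset L <= P} & (0 < size L <= size P)%N].
Proof.
move=> hv hv' hL.
have [ch e0 e1 sub sz] :=
  upper_chain_spec (lexmax_negp hv') (lexmin_negp hv) (lower_chain_negp hL).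
move: e0 e1 sz; rewrite !vtx_negp !size_map => /negp_inj e0 /negp_inj e1 sz.
split=> //; first exact: convex_chain_negp.
by move=> x xL; rewrite -(mem_map negp_inj) sub // (mem_map negp_inj).
Qed.

(** * The query point of a recursive call *)

Definition shift (p d : pt) (t : R) : pt := (p.1 + t * d.1, p.2 + t * d.2).

Lemma orient_shift (a b p d : pt) t :
  orient a b (shift p d t) = orient a b p + t * cross (vsub b a) d.
Proof. rewrite !orientE /cross /=; ring. Qed.

Lemma orient_mid_shift (a d z : pt) t :
  orient a (shift a d t) z = t * cross d (vsub z a).
Proof. rewrite orientE /cross /=; ring. Qed.

Section MeetPoint.
Variable W : seq pt.
Hypothesis chW : convex_chain W.

Lemma meet_rays i j : (0 < i)%N -> (i < j)%N -> (j < size W)%N ->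
  exists tau mu : R, [/\ 0 < tau, mu < 0,
    meet (vtx W i.-1) (vtx W i) (vtx W j.-1) (vtx W j) = shift (vtx W i.-1) (edge W i) tau &
    meet (vtx W i.-1) (vtx W i) (vtx W j.-1) (vtx W j) = shift (vtx W j) (edge W j) mu].
Proof.
move=> i0 ij jW; have [cwv cwe] := chW.
have den := cwe _ _ i0 ij jW.
have o1 : orient (vtx W i.-1) (vtx W j.-1) (vtx W j) < 0 by apply: cwv; lia.
have o2 : orient (vtx W i.-1) (vtx W i) (vtx W j) < 0 by apply: cwv; lia.
move: den o1 o2; rewrite /edge /meet.
set A := vtx W i.-1; set B := vtx W i; set C := vtx W j.-1; set D := vtx W j.
move=> den o1 o2; have dn : cross (vsub B A) (vsub D C) != 0 by rewrite lt_eqF.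
exists (cross (vsub C A) (vsub D C) / cross (vsub B A) (vsub D C)).
exists (cross (vsub D A) (vsub B A) / cross (vsub B A) (vsub D C)); split=> //.
- rewrite -mulrNN -invrN divr_gt0 // oppr_gt0 //.
  by move: o1; rewrite orientE /cross /=; lra.
- rewrite pmulr_rlt0 ?invr_lt0 //.
  by move: o2; rewrite orientE /cross /=; lra.
- by move: dn; rewrite /shift /cross /= => dn; congr (_, _); field.
Qed.

Lemma meet_consecutive i : (0 < i)%N -> (i.+1 < size W)%N ->
  meet (vtx W i.-1) (vtx W i) (vtx W i.+1.-1) (vtx W i.+1) = vtx W i.
Proof.
move=> i0 iW; have := chW.2 _ _ i0 (ltnSn i) iW; rewrite /edge /= => h.
rewrite /meet /= divff ?lt_eqF // !mul1r [RHS]surjective_pairing.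
by congr (_, _); ring.
Qed.

Lemma meet_triangle (S : set pt) i j t : convex_set S ->
  (0 < i)%N -> (i < j)%N -> (j < size W)%N ->
  S (vtx W i.-1) -> S (vtx W j) -> S (meet (vtx W i.-1) (vtx W i) (vtx W j.-1) (vtx W j)) ->
  (i <= t)%N -> (t < j)%N -> S (vtx W t).
Proof.
move=> cv i0 ij jW SA SD Sq it tj; have [cwv _] := chW.
have [tau [mu [tau0 mu0 q_i q_j]]] := meet_rays i0 ij jW.
move: Sq q_i q_j; set q := meet _ _ _ _ => Sq q_i q_j.
apply: (@convex_triangle S (vtx W i.-1) q (vtx W j) (vtx W t) cv SA Sq SD).
- by rewrite q_i orient_mid_shift pmulr_rlt0 //; apply: cwv; lia.
- have -> : orient (vtx W t) q (vtx W j) = - mu * orient (vtx W t) (vtx W j.-1) (vtx W j).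
    by rewrite q_j !orientE /edge /shift /=; ring.
  rewrite pmulr_rle0 ?oppr_gt0 //.
  have [->|ne] := eqVneq t j.-1; first by rewrite orient_dup12.
  by apply/ltW/cwv; lia.
- by apply/ltW/cwv; lia.
- rewrite q_i orient_mid_shift pmulr_rle0 //.
  have [->|ne] := eqVneq t i; first by rewrite /edge -/(orient _ _ _) orient_dup23.
  by apply/ltW/cwv; lia.
Qed.

End MeetPoint.

(** * Edges of the inner fence separating a query point *)

Lemma orient_collinear (q a x y z : pt) : q != a ->
  orient q a x = 0 -> orient q a y = 0 -> orient q a z = 0 -> orient x y z = 0.
Proof.
move=> qa ox oy oz.
have id : ((q.1 - a.1) * (q.1 - a.1) + (q.2 - a.2) * (q.2 - a.2)) * orient x y z =
   (orient q a z - orient q a x) * ((a.1 - q.1) * (y.1 - x.1) + (a.2 - q.2) * (y.2 - x.2))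
 - (orient q a y - orient q a x) * ((a.1 - q.1) * (z.1 - x.1) + (a.2 - q.2) * (z.2 - x.2)).
  by rewrite !orientE; ring.
move: id; rewrite ox oy oz subrr !mul0r subrr => /eqP.
by rewrite mulf_eq0 gt_eqF ?sqr_sum_gt0 //= => /eqP.
Qed.

Definition supporting (V : seq pt) (a b : pt) : Prop := {in V, forall z, 0 <= orient a b z}.

Lemma tangent_vertex (V : seq pt) (q : pt) u1 u2 : V != [::] ->
  {in V, forall z, lin u1 u2 z < lin u1 u2 q} ->
  exists2 a, a \in V & {in V, forall z, 0 <= orient q a z /\
    (orient q a z = 0 -> 0 <= lin (a.1 - q.1) (a.2 - q.2) (vsub z a))}.
Proof.
move=> V0 sep; pose g z := lin u1 u2 q - lin u1 u2 z.
pose d (z : pt) := u1 * (z.2 - q.2) - u2 * (z.1 - q.1).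
have g0 z : z \in V -> 0 < g z by move/sep; rewrite subr_gt0.
(* [d z / g z] is the tangent of the angle at [q] between [z - q] and [- u]: [a]
   is a point of [V] seen under the extreme angle, the nearest one among ties. *)
have [a aV amax] := lex_argmax_seq (fun z => d z / g z) (fun z => - g z) V0.
exists a => // z zV; have [rho_le rho_eq] := amax z zV.
have ga := g0 a aV; have gz := g0 z zV.
have uu : 0 < u1 * u1 + u2 * u2.
  rewrite lt_def addr_ge0 ?mul_self_ge0 // andbT; apply/negP => /eqP /sqr_sum_eq0 [u10 u20].
  by move: ga; rewrite /g /lin u10 u20 !mul0r !addr0 subrr ltxx.
have I1 : (u1 * u1 + u2 * u2) * orient q a z = d a * g z - g a * d z.
  by rewrite /d /g /lin orientE; ring.
split=> [|o0].
  rewrite -(pmulr_rge0 _ uu) I1 subr_ge0.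
  by move: rho_le; rewrite ler_ratio // [d z * _]mulrC.
have /rho_eq : d z / g z = d a / g a.
  apply/eqP; rewrite eqr_div ?lt0r_neq0 // [d z * _]mulrC eq_sym.
  by rewrite -subr_eq0 -I1 o0 mulr0.
rewrite lerN2 => gaz.
have I2 : ((a.1 - q.1) * (a.1 - q.1) + (a.2 - q.2) * (a.2 - q.2)) * g z =
    ((a.1 - q.1) * (z.1 - q.1) + (a.2 - q.2) * (z.2 - q.2)) * g a
    - orient q a z * ((a.1 - q.1) * u2 - (a.2 - q.2) * u1).
  by rewrite /g /lin orientE; ring.
rewrite o0 mul0r subr0 in I2.
have -> : lin (a.1 - q.1) (a.2 - q.2) (vsub z a) =
    ((a.1 - q.1) * (z.1 - q.1) + (a.2 - q.2) * (z.2 - q.2))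
    - ((a.1 - q.1) * (a.1 - q.1) + (a.2 - q.2) * (a.2 - q.2)) by rewrite /lin /=; ring.
rewrite -(pmulr_lge0 _ ga) mulrBl -I2 -mulrBr mulr_ge0 ?subr_ge0 //.
by rewrite addr_ge0 ?mul_self_ge0.
Qed.

Lemma supporting_edge_of_tangent (V : seq pt) (q a : pt) : a \in V ->
  {in V, forall z, 0 <= orient q a z /\
    (orient q a z = 0 -> 0 <= lin (a.1 - q.1) (a.2 - q.2) (vsub z a))} ->
  has (fun z => 0 < orient q a z) V ->
  exists2 b, b \in V & supporting V b a /\ 0 < orient q a b.
Proof.
move=> aV tan /hasP[z0 z0V z0pos].
(* [b] is the next vertex of [conv V] after [a]: the smallest angle [al / be] at [a]. *)
pose al z := lin (a.1 - q.1) (a.2 - q.2) (vsub z a).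
pose be z := orient q a z.
have [|b] := argmax_seq (fun z => - (al z / be z)) (s := [seq z <- V | 0 < be z]).
  have : z0 \in [seq z <- V | 0 < be z] by rewrite mem_filter z0pos.
  by apply: contraTneq => ->.
rewrite mem_filter => /andP[bpos bV] bmax; exists b => //; split=> // z zV.
have qa : q != a by apply: contraTneq z0pos => ->; rewrite orient_dup12 ltxx.
have I3 : ((q.1 - a.1) * (q.1 - a.1) + (q.2 - a.2) * (q.2 - a.2)) * orient b a z =
    be b * al z - al b * be z.
  by rewrite /be /al /lin !orientE /=; ring.
rewrite -(pmulr_rge0 _ (sqr_sum_gt0 qa)) I3 subr_ge0.
have [zpos|] := ltP 0 (be z).
  have := bmax z; rewrite mem_filter zpos zV lerN2 => /(_ isT).
  by rewrite ler_ratio // [al z * _]mulrC.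
move=> be_le0; have [be_ge0 tie] := tan z zV.
have be0 : be z = 0 by apply/eqP; rewrite eq_le be_le0 be_ge0.
by rewrite be0 mulr0 mulr_ge0 //; [exact: ltW | exact: tie].
Qed.

Lemma separating_edge (V : seq pt) (q x y z : pt) u1 u2 :
  {in V, forall p, lin u1 u2 p < lin u1 u2 q} ->
  conv V x -> conv V y -> conv V z -> orient x y z != 0 ->
  exists a b, [/\ a \in V, b \in V, a != b, supporting V a b & orient a b q < 0].
Proof.
move=> sep Vx Vy Vz xyz.
have [a aV tan] := tangent_vertex (conv_nonempty Vx) sep.
have qa : q != a by apply: contraTneq (sep a aV) => ->; rewrite ltxx.
have [/(supporting_edge_of_tangent aV tan)[b bV [supp qab]]|/hasPn flat] :=
  boolP (has (fun p => 0 < orient q a p) V).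
  exists b, a; split=> //.
    by apply: contraTneq qab => ->; rewrite orient_dup23 ltxx.
  by rewrite orient_rot orient_swap23 oppr_lt0.
have on_line p : conv V p -> orient q a p = 0.
  move=> Vp; apply/eqP; rewrite eq_le (conv_orient_ge0 Vp) ?andbT.
    by apply: conv_orient_le0 Vp _ => p' /flat; rewrite leNgt.
  by move=> p' /tan [].
have := orient_collinear qa (on_line _ Vx) (on_line _ Vy) (on_line _ Vz).
by move/eqP; rewrite (negPf xyz).
Qed.

(** * Charging failed queries to fence vertices *)

Lemma cross_parallel (u w : pt) : cross u w = 0 -> forall d : pt,
  (u.1 * u.1 + u.2 * u.2) * cross w d = lin u.1 u.2 w * cross u d.
Proof.
move=> uw d; have : (u.1 * u.1 + u.2 * u.2) * cross w d =
    lin u.1 u.2 w * cross u d - cross u w * lin u.1 u.2 d by rewrite /lin /cross; ring.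
by rewrite uw mul0r subr0.
Qed.

Lemma supporting_parallel (V : seq pt) a b1 b2 : b1 \in V -> b2 \in V ->
  supporting V a b1 -> supporting V a b2 -> cross (vsub b1 a) (vsub b2 a) = 0.
Proof.
move=> b1V b2V s1 s2; have := s1 _ b2V; have := s2 _ b1V.
rewrite /orient /cross /= => h1 h2; apply/eqP; rewrite eq_le; apply/andP; split; lra.
Qed.

Section Charging.
Variable W : seq pt.
Hypothesis chW : convex_chain W.

Lemma cross_sign_alternation (u : pt) x y z : (0 < x)%N -> (x < y)%N -> (y < z)%N ->
  (z < size W)%N -> cross u (edge W x) < 0 -> 0 < cross u (edge W y) ->
  cross u (edge W z) < 0 -> False.
Proof.
move=> x0 xy yz zW hx hy hz; have [_ cwe] := chW.
have Nxy := cwe _ _ x0 xy (ltn_trans yz zW).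
have Nxz := cwe _ _ x0 (ltn_trans xy yz) zW.
have Nyz := cwe _ _ (ltn_trans x0 xy) yz zW.
move: Nxy Nxz Nyz hx hy hz; rewrite /cross.
set a := edge W x; set b := edge W y; set c := edge W z; nra.
Qed.

Variable V : seq pt.

(* The charging scheme: a call [(i, j)] whose query point is outside [C] is
   charged to a fence vertex [a] whose outgoing fence edge turns strictly
   between two chain edges of the call. *)
Definition charged (i j : nat) (a : pt) : Prop :=
  exists2 b, b \in V & [/\ a != b, supporting V a b &
    exists s t, [/\ (0 < s)%N, (i <= s)%N, (s < t)%N, (t <= j)%N & (t < size W)%N] /\
      [/\ conv V (vtx W s.-1), conv V (vtx W s),
          cross (vsub b a) (edge W s) < 0 & 0 < cross (vsub b a) (edge W t)]].

Definition charge (i j : nat) : nat := count (fun a => `[< charged i j a >]) V.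

Lemma charged_widen i j i' j' a : (i' <= i)%N -> (j <= j')%N ->
  charged i j a -> charged i' j' a.
Proof.
move=> i'i jj' [b bV [ab sab [s [t [[s0 is_ st tj tW] rest]]]]].
exists b => //; split=> //; exists s, t; split=> //; split=> //.
  exact: leq_trans is_.
exact: leq_trans jj'.
Qed.

Lemma charged_disjoint i m j a : charged i m a -> charged m j a -> False.
Proof.
(* The fence edges [a b1] and [a b2] are parallel. If they point the same way,
   their direction meets the chain edges [s1], [t1], [s2] with the signs -, +, -,
   which a convex chain forbids; if they are opposite, [V] is flat. *)
move=> [b1 b1V [ab1 sup1 [s1 [t1 [[s10 _ st1 t1m _] [Vs1' Vs1 neg1 pos1]]]]]].
move=> [b2 b2V [_ sup2 [s2 [t2 [[_ ms2 st2 _ t2W] [_ _ neg2 _]]]]]].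
have sW : (s2 < size W)%N := ltn_trans st2 t2W.
set u1 := vsub b1 a in neg1 pos1; set u2 := vsub b2 a in neg2.
have u1n : 0 < u1.1 * u1.1 + u1.2 * u1.2 by apply: sqr_sum_gt0; rewrite eq_sym.
have rel := cross_parallel (supporting_parallel b1V b2V sup1 sup2).
rewrite -/u1 -/u2 in rel; set k := lin u1.1 u1.2 u2 in rel.
have [k0|k0|k0] := ltgtP k 0; last first.
- move: (rel (edge W s2)); rewrite k0 mul0r => /eqP; rewrite mulf_eq0 gt_eqF //=.
  by move=> /eqP e0; move: neg2; rewrite e0 ltxx.
- have neg1' : cross u1 (edge W s2) < 0.
    by rewrite -(pmulr_rlt0 _ k0) -rel pmulr_rlt0.
  have [e|ne] := eqVneq t1 s2.
    by move: pos1; rewrite e => /(lt_trans neg1'); rewrite ltxx.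
  apply: (cross_sign_alternation s10 st1 _ sW neg1 pos1 neg1').
  by rewrite ltn_neqAle ne (leq_trans t1m).
have flat z : conv V z -> orient a b1 z = 0.
  move=> Vz; apply/eqP; rewrite eq_le (conv_orient_ge0 Vz sup1) andbT.
  apply: conv_orient_le0 Vz _ => z' z'V.
  have := rel (vsub z' a); rewrite -/(orient a b2 z') -/(orient a b1 z') => e.
  by rewrite -(nmulr_rge0 _ k0) -e; apply: mulr_ge0; [exact: ltW | exact: sup2].
by move: neg1; rewrite /edge cross_vsub !flat // subrr ltxx.
Qed.

Lemma charge_split i m j : (i <= m)%N -> (m <= j)%N ->
  (charge i m + charge m j <= charge i j)%N.
Proof.
move=> im mj; rewrite /charge -count_predUI.
rewrite (@eq_count _ (predI _ _) pred0) ?count_pred0 ?addn0.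
  by apply: sub_count => a /orP[] /asboolP h; apply/asboolP; apply: charged_widen h.
by move=> a /=; apply/andP => -[/asboolP h1 /asboolP h2]; exact: charged_disjoint h1 h2.
Qed.

End Charging.

(** * Correctness and query count of the algorithm *)

Section Oracle.
Variables (C : set pt) (O : pt -> option (R * R * R)).
Hypothesis hO : sep_oracle C O.

Lemma mem_ofP q : reflect (C q) (mem_of O q).
Proof.
rewrite /mem_of; move: (hO q); case: (O q) => [[[a b] c]|] /=; last by left.
move=> [_ [qc sep]]; right => /sep; apply/negP; rewrite -ltNge //.
Qed.

Lemma oracle_separation q : ~ C q ->
  exists u1 u2, forall z, C z -> lin u1 u2 z < lin u1 u2 q.
Proof.
move: (hO q); case: (O q) => [[[a b] c]|//] [_ [qc sep]] _.
by exists a, b => z /sep zc; apply: le_lt_trans zc qc.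
Qed.

Lemma check_list_spec (s : seq pt) :
  let (r, Q) := check_list O s in
  [/\ (size Q <= size s)%N, r = None -> {in s, forall x, C x} &
      forall p, r = Some p -> p \in s /\ ~ C p].
Proof.
elim: s => [|x s IH] //=; have [Cx|xC] := mem_ofP x; last first.
  by split=> // p [<-]; rewrite mem_head.
case: check_list IH => r Q [sQ all_in out]; split=> //.
  by move=> /all_in sC y; rewrite in_cons => /predU1P[-> //|/sC].
by move=> p /out [ps pC]; rewrite in_cons ps orbT.
Qed.

End Oracle.

Section Verification.
Variables (C : set pt) (O : pt -> option (R * R * R)) (W P V : seq pt).
Hypotheses (hO : sep_oracle C O) (cvC : convex_set C) (chW : convex_chain W)
  (WP : {subset W <= P}) (hF : inner_fence C P V).

Lemma conv_fence_vtx t : (t < size W)%N -> C (vtx W t) -> conv V (vtx W t).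
Proof. by move=> tW /(hF.2 _ (WP (mem_nth (0, 0) tW))). Qed.

Lemma charge_pos i j : (0 < i)%N -> (i < j)%N -> (j < size W)%N ->
  ~ C (meet (vtx W i.-1) (vtx W i) (vtx W j.-1) (vtx W j)) ->
  C (vtx W i.-1) -> C (vtx W i) -> C (vtx W j) -> (0 < charge W V i j)%N.
Proof.
move=> i0 ij jW qC CA CB CD; have [cwv _] := chW.
have [tau [mu [tau0 mu0 q_i q_j]]] := meet_rays chW i0 ij jW.
have [u1 [u2 sep]] := oracle_separation hO qC.
have VA := conv_fence_vtx (ltn_trans (leq_ltn_trans (leq_pred i) ij) jW) CA.
have VB := conv_fence_vtx (ltn_trans ij jW) CB.
have VD := conv_fence_vtx jW CD.
have ABD : orient (vtx W i.-1) (vtx W i) (vtx W j) != 0 by apply/ltr0_neq0/cwv; lia.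
have [a [b [aV bV ab sup abq]]] :=
  separating_edge (fun z zV => sep z (hF.1 z (mem_conv zV))) VA VB VD ABD.
rewrite -has_count; apply/hasP; exists a => //; apply/asboolP.
exists b => //; split=> //; exists i, j; split=> //; split=> //.
- have := abq; rewrite q_i orient_shift => abq'.
  rewrite -(pmulr_rlt0 _ tau0); apply: le_lt_trans abq'.
  by rewrite lerDr (conv_orient_ge0 VA).
- have := abq; rewrite q_j orient_shift => abq'.
  rewrite -(nmulr_rlt0 _ mu0); apply: le_lt_trans abq'.
  by rewrite lerDr (conv_orient_ge0 VD).
Qed.

Definition covered (i j : nat) : Prop :=
  forall t, (i.-1 <= t)%N -> (t <= j)%N -> C (vtx W t).

Lemma covered_ends i j : (j <= i)%N -> C (vtx W i.-1) -> C (vtx W j) -> covered i j.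
Proof.
move=> ji CA CD t it tj; have [->//|tA] := eqVneq t i.-1.
by have -> : t = j by lia.
Qed.

Lemma covered_meet i j : (0 < i)%N -> (i < j)%N -> (j < size W)%N ->
  C (vtx W i.-1) -> C (vtx W j) -> C (meet (vtx W i.-1) (vtx W i) (vtx W j.-1) (vtx W j)) ->
  covered i j.
Proof.
move=> i0 ij jW CA CD Cq t it tj; have [->//|tA] := eqVneq t i.-1.
have [->//|tD] := eqVneq t j.
by apply: (meet_triangle chW cvC i0 ij jW CA CD Cq); lia.
Qed.

Lemma covered_cat i m j : (i <= m)%N -> covered i m -> covered m j -> covered i j.
Proof.
move=> im cim cmj t it tj; have [tm|mt] := leqP t m; first exact: cim.
by apply: cmj => //; lia.
Qed.

(* A call whose query point is outside [C] costs three queries and carries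
   charge at least one; a witness is found after at most [4 h + 3] further
   queries along its branch. *)
Definition verify_post (i j h : nat) (res : outcome R * seq pt) : Prop :=
  let (r, Q) := res in
  (r = AllIn /\ covered i j /\ (size Q <= 7 * h * charge W V i j + 1)%N) \/
  exists2 p, r = Witness p &
    [/\ p \in P, ~ C p & (size Q <= 7 * h * charge W V i j + 4 * h + 3)%N].

Lemma verify_spec fuel i j h : (0 < i)%N -> (j < size W)%N ->
  C (vtx W i.-1) -> C (vtx W j) -> (j - i < fuel)%N -> (j - i <= 2 ^ h)%N ->
  verify_post i j h (verify fuel O W i j).
Proof.
elim: fuel i j h => [|f IH] i j h i0 jW CA CD // jif jih.
rewrite /= -[nth (0, 0) W]/(vtx W).
case: (leqP j i) => [ji|ij]; first by left; split; [|split; [exact: covered_ends|]].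
set q := meet _ _ _ _; set m := (i + j)./2.
have [Cq|qC] := mem_ofP hO q.
  by left; split; [|split; [exact: covered_meet | rewrite leq_addl]].
have mP t : (t < size W)%N -> vtx W t \in P by move=> tW; apply/WP/mem_nth.
have [Cx|xC] /= := mem_ofP hO (vtx W m.-1); last first.
  by right; exists (vtx W m.-1) => //; split=> //; [apply: mP | rewrite /=]; lia.
have [Cy|yC] /= := mem_ofP hO (vtx W m); last first.
  by right; exists (vtx W m) => //; split=> //; [apply: mP | rewrite /=]; lia.
(* For [j = i.+1] the query point is [vtx W i], just found inside [C]. *)
have ij1 : (i.+1 < j)%N.
  rewrite ltn_neqAle ij andbT; apply/eqP => ej; apply: qC.
  rewrite /q -ej meet_consecutive // ?ej //.
  by move: Cy; rewrite /m -ej; congr (C (vtx W _)); lia.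
have im : (i <= m)%N by rewrite /m; lia.
have mj : (m < j)%N by rewrite /m; lia.
case: h jih => [|h] jih; first by move: jih; rewrite expn0; lia.
have h1 : (m - i <= 2 ^ h)%N by move: jih; rewrite expnS /m; lia.
have h2 : (j - m <= 2 ^ h)%N by move: jih; rewrite expnS /m; lia.
have cs := charge_split chW V im (ltnW mj).
have := IH i m h i0 (ltn_trans mj jW) CA Cy ltac:(lia) h1.
case: (verify f O W i m) => [r1 Q1] [[-> [cov1 s1]]|[p -> [pP pC s1]]]; last first.
  by right; exists p => //; split=> //=; nia.
have := IH m j h ltac:(lia) jW Cx CD ltac:(lia) h2.
case: (verify f O W m j) => [r2 Q2] [[-> [cov2 s2]]|[p -> [pP pC s2]]]; last first.
  by right; exists p => //; split=> //; rewrite /= size_cat; nia.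
have cp := charge_pos i0 ij jW qC CA (cov1 i (leq_pred i) im) CD.
left; split=> //; split; first exact: covered_cat cov1 cov2.
by rewrite /= size_cat; nia.
Qed.

Lemma verify_chain_spec h : (0 < size W)%N -> (size W <= 2 ^ h)%N ->
  C (vtx W 0) -> C (vtx W (size W).-1) ->
  let (r, Q) := verify_chain O W in
  (r = AllIn /\ {in W, forall p, C p} /\ (size Q <= 7 * h * size V + 1)%N) \/
  exists2 p, r = Witness p &
    [/\ p \in P, ~ C p & (size Q <= 7 * h * size V + 4 * h + 3)%N].
Proof.
move=> W0 Wh C0 C1; have cV := count_size (fun a => `[< charged W V 1 (size W).-1 a >]) V.
have := @verify_spec (size W) 1 (size W).-1 h isT ltac:(lia) C0 C1 ltac:(lia) ltac:(lia).
rewrite /verify_chain; case: verify => r Q [[-> [cov sQ]]|[p -> [pP pC sQ]]].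
  left; split=> //; split.
    move=> p pW; rewrite -(nth_index (0, 0) pW); apply: cov => //.
    by rewrite -ltnS prednK // index_mem.
  by apply: leq_trans sQ _; rewrite leq_add2r leq_mul2l cV orbT.
right; exists p => //; split=> //; apply: leq_trans sQ _.
by rewrite -!addnA leq_add2r leq_mul2l cV orbT.
Qed.

End Verification.

Section Classification.
Variables (C : set pt) (O : pt -> option (R * R * R)).
Hypothesis hO : sep_oracle C O.
Variables (P : seq pt) (v v' : pt) (U L V : seq pt).
Hypotheses (cvC : convex_set C) (hv : lexmin_of P v) (hv' : lexmax_of P v')
  (hU : upper_chain P v v' U) (hL : lower_chain P v v' L) (hF : inner_fence C P V).

Lemma chains_cover_hull :
  {in U, forall p, C p} -> {in L, forall p, C p} -> {in P, forall p, C p}.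
Proof.
move=> UC LC p pP; apply: contrapT => pC.
have [a ha aC] := outside_hull_vertex hO pP pC; apply: aC.
have [oa|oa] := leP 0 (orient v v' a).
  by apply/UC/hU.2.
by apply/LC/hL.2; split=> //; exact: ltW.
Qed.

Lemma classify_spec :
  let (r, Q) := classify O v v' U L in
  ((r = AllIn /\ forall p, p \in P -> C p) \/
   (exists p, r = Witness p /\ p \in P /\ ~ C p)) /\
  (size Q <= 26 * (size V).+1 * (trunc_log 2 (size P)).+1)%N.
Proof.
have [chU U0 U1 UP /andP[U0s UPs]] := upper_chain_spec hv hv' hU.
have [chL L0 L1 LP /andP[L0s LPs]] := lower_chain_spec hv hv' hL.
set T := trunc_log 2 (size P).
have PT : (size P <= 2 ^ T.+1)%N by apply/ltnW/trunc_log_ltn.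
have := verify_chain_spec hO cvC chU UP hF U0s (leq_trans UPs PT).
have := verify_chain_spec hO cvC chL LP hF L0s (leq_trans LPs PT).
rewrite U0 U1 L0 L1 {PT UPs LPs} => verL verU.
rewrite /classify; set six := [:: v; _; _; _; _; _].
have sixP : {subset six <= P}.
  by apply/allP; rewrite /= hv.1 hv'.1 !nth_mem_sub ?hv.1.
have := check_list_spec hO six; case: check_list => [[p|] Q0] [sQ0 six_in out].
  have [ps pC] := out p erefl; split; first by right; exists p; rewrite sixP.
  by apply: leq_trans sQ0 _; rewrite /six /=; nia.
have {}sQ0 : (size Q0 <= 6)%N by [].
(* Of the six initial queries, only [v] and [v'] matter for correctness. *)
have [Cv Cv'] : C v /\ C v'.
  by split; apply: six_in => //; rewrite !inE eqxx ?orbT.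
move: verU => /(_ Cv Cv'); case: verify_chain => [r1 Q1] [[-> [UC s1]]|[p -> [pP pC s1]]].
  move: verL => /(_ Cv' Cv); case: verify_chain => [r2 Q2] [[-> [LC s2]]|[p -> [pP pC s2]]].
    by split; [left; split=> //; exact: chains_cover_hull | rewrite !size_cat; nia].
  by split; [right; exists p | rewrite !size_cat; nia].
by split; [right; exists p | rewrite size_cat; nia].
Qed.

End Classification.

End PlaneGeometry.

Theorem lemma4p4 :
  exists c : nat, forall (R : realType) (C : set (R * R)%type)
    (O : (R * R)%type -> option (R * R * R)) (P : seq (R * R)%type)
    (v v' : (R * R)%type) (U L : seq (R * R)%type) (k : nat),
    convex_body C -> sep_oracle C O -> uniq P ->
    lexmin_of P v -> lexmax_of P v' ->
    upper_chain P v v' U -> lower_chain P v v' L ->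
    inner_fence_size C P k ->
    let (r, Q) := classify O v v' U L in
    ((r = AllIn /\ forall p, p \in P -> C p) \/
     (exists p, r = Witness p /\ p \in P /\ ~ C p)) /\
    (size Q <= c * k.+1 * (trunc_log 2 (size P)).+1)%N.
Proof.
exists 26 => R C O P v v' U L k [cvC _ _] hO _ hv hv' hU hL [[V [hF <-]] _].
exact: classify_spec.
Qed.
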